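(* Suppose $\mathcal C$ has a parameterized natural number object. If $P:\mathcal C^{op}\to\mathbf{InfSL}$ is a weak hyperdoctrine with full weak comprehensions and comprehensive diagonals, then $P$ is arithmetic, i.e. the parameterized natural number object satisfies induction in $P$.
   Context: A parameterized natural number object is $(\mathbf N,0:1\to\mathbf N,s:\mathbf N\to\mathbf N)$ such that for all $a:A\to X$, $f:X\to X$ there is a unique $k:A\times\mathbf N\to X$ with $k\langle\mathrm{id}_A,0\rangle=a$ and $k(\mathrm{id}_A\times s)=fk$. It satisfies induction in $P$ if for all $A$ and $\phi\in P(A\times\mathbf N)$, whenever $a:A\vdash\phi(a,0)$ and $a:A,m:\mathbf N\mid\phi(a,m)\vdash\phi(a,s(m))$, then $a:A,n:\mathbf N\vdash\phi(a,n)$. A weak hyperdoctrine is an elementary doctrine (with equality predicates $\delta_A$, written $=_A$) over a weakly cartesian closed base, with Heyting fibres and reindexing, and left and right adjoints to reindexing along product projections satisfying Beck–Chevalley; it is arithmetic if its base has a parameterized natural number object satisfying induction. A weak comprehension of $\alpha\in P(A)$ is an arrow $\{\alpha\}:X\to A$ with $\top\le P_{\{\alpha\}}(\alpha)$ through which every $f:Z\to A$ with $\top\le P_f(\alpha)$ factors (not necessarily uniquely); $P$ has full weak comprehensions if every $\alpha$ has one and $\alpha\le\beta$ whenever $\{\alpha\}$ factors through $\{\beta\}$. Comprehensive diagonals: $f=g$ whenever $\top\vdash f(x)=_Yg(x)$. *)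

(* Arrows are compared with Leibniz equality. *)

Set Implicit Arguments.

Record Cat := {
  ob :> Type;
  hom : ob -> ob -> Type;
  idm : forall A, hom A A;
  comp : forall A B C, hom B C -> hom A B -> hom A C;
  comp_id_l : forall A B (f : hom A B), comp (idm B) f = f;
  comp_id_r : forall A B (f : hom A B), comp f (idm A) = f;
  comp_assoc : forall A B C D (h : hom C D) (g : hom B C) (f : hom A B),
      comp h (comp g f) = comp (comp h g) f
}.

Arguments hom {c} _ _.
Arguments idm {c} A.
Arguments comp {c A B C} _ _.

Notation "g ∘ f" := (comp g f) (at level 40, left associativity).

Record WCC (C : Cat) := {
  term : C;
  bang : forall A : C, hom A term;
  bang_uniq : forall (A : C) (f : hom A term), f = bang A;
  prod : C -> C -> C;
  p1 : forall A B : C, hom (prod A B) A;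
  p2 : forall A B : C, hom (prod A B) B;
  pair : forall X A B : C, hom X A -> hom X B -> hom X (prod A B);
  p1_pair : forall X A B (f : hom X A) (g : hom X B), p1 A B ∘ pair _ _ _ f g = f;
  p2_pair : forall X A B (f : hom X A) (g : hom X B), p2 A B ∘ pair _ _ _ f g = g;
  pair_uniq : forall X A B (f : hom X A) (g : hom X B) (h : hom X (prod A B)),
      p1 A B ∘ h = f -> p2 A B ∘ h = g -> h = pair _ _ _ f g;
  wexp : C -> C -> C;               (* weak exponential B^A = wexp A B *)
  wev : forall A B : C, hom (prod (wexp A B) A) B;
  wcurry : forall (X A B : C) (f : hom (prod X A) B),
      exists g : hom X (wexp A B),
        wev A B ∘ pair _ _ _ (g ∘ p1 X A) (idm A ∘ p2 X A) = f
}.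

Arguments term {C} _.
Arguments bang {C} _ A.
Arguments prod {C} _ _ _.
Arguments p1 {C} _ A B.
Arguments p2 {C} _ A B.
Arguments pair {C} _ {X A B} _ _.
Arguments wexp {C} _ _ _.
Arguments wev {C} _ A B.

Section Derived.
Variables (C : Cat) (W : WCC C).

Definition prodmap (A A' B B' : C) (f : hom A A') (g : hom B B')
  : hom (prod W A B) (prod W A' B') :=
  pair W (f ∘ p1 W A B) (g ∘ p2 W A B).

Definition diag (A : C) : hom A (prod W A A) := pair W (idm A) (idm A).

Definition pr13 (A B : C) : hom (prod W (prod W A B) (prod W A B)) (prod W A A) :=
  pair W (p1 W A B ∘ p1 W _ _) (p1 W A B ∘ p2 W _ _).
Definition pr24 (A B : C) : hom (prod W (prod W A B) (prod W A B)) (prod W B B) :=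
  pair W (p2 W A B ∘ p1 W _ _) (p2 W A B ∘ p2 W _ _).
End Derived.

Arguments prodmap {C} _ {A A' B B'} _ _.
Arguments diag {C} _ A.
Arguments pr13 {C} _ A B.
Arguments pr24 {C} _ A B.

Unset Implicit Arguments.
Record WeakHyperdoctrine (C : Cat) (W : WCC C) := {
  pred : C -> Type;
  ple : forall A, pred A -> pred A -> Prop;
  ple_refl : forall A (a : pred A), ple A a a;
  ple_trans : forall A (a b c : pred A), ple A a b -> ple A b c -> ple A a c;
  ple_antisym : forall A (a b : pred A), ple A a b -> ple A b a -> a = b;
  ptop : forall A, pred A;
  pand : forall A, pred A -> pred A -> pred A;
  ptop_max : forall A (a : pred A), ple A a (ptop A);
  pand_glb : forall A (a b c : pred A),
      ple A c (pand A a b) <-> (ple A c a /\ ple A c b);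
  pbot : forall A, pred A;
  por : forall A, pred A -> pred A -> pred A;
  pimp : forall A, pred A -> pred A -> pred A;
  pbot_min : forall A (a : pred A), ple A (pbot A) a;
  por_lub : forall A (a b c : pred A),
      ple A (por A a b) c <-> (ple A a c /\ ple A b c);
  pimp_adj : forall A (a b c : pred A),
      ple A c (pimp A a b) <-> ple A (pand A c a) b;
  reix : forall (A B : C), hom A B -> pred B -> pred A;
  reix_mono : forall A B (f : hom A B) (a b : pred B),
      ple B a b -> ple A (reix A B f a) (reix A B f b);
  reix_id : forall A (a : pred A), reix A A (idm A) a = a;
  reix_comp : forall A B D (f : hom A B) (g : hom B D) (a : pred D),
      reix A D (g ∘ f) a = reix A B f (reix B D g a);
  reix_top : forall A B (f : hom A B), reix A B f (ptop B) = ptop A;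
  reix_and : forall A B (f : hom A B) (a b : pred B),
      reix A B f (pand B a b) = pand A (reix A B f a) (reix A B f b);
  reix_bot : forall A B (f : hom A B), reix A B f (pbot B) = pbot A;
  reix_or : forall A B (f : hom A B) (a b : pred B),
      reix A B f (por B a b) = por A (reix A B f a) (reix A B f b);
  reix_imp : forall A B (f : hom A B) (a b : pred B),
      reix A B f (pimp B a b) = pimp A (reix A B f a) (reix A B f b);
  delta : forall A : C, pred (prod W A A);
  delta_refl : forall A : C,
      ple A (ptop A) (reix A _ (diag W A) (delta A));
  delta_subst : forall (A : C) (a : pred A),
      ple (prod W A A)
          (pand _ (reix _ _ (p1 W A A) a) (delta A)) (reix _ _ (p2 W A A) a);
  delta_prod : forall A B : C,
      ple _ (pand _ (reix _ _ (pr13 W A B) (delta A)) (reix _ _ (pr24 W A B) (delta B)))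
            (delta (prod W A B));
  pex : forall A B : C, pred (prod W A B) -> pred A;
  pall : forall A B : C, pred (prod W A B) -> pred A;
  pex_adj : forall (A B : C) (a : pred (prod W A B)) (b : pred A),
      ple A (pex A B a) b <-> ple _ a (reix _ _ (p1 W A B) b);
  pall_adj : forall (A B : C) (a : pred (prod W A B)) (b : pred A),
      ple _ (reix _ _ (p1 W A B) b) a <-> ple A b (pall A B a);
  pex_BC : forall (X A B : C) (f : hom X A) (a : pred (prod W A B)),
      reix X A f (pex A B a) = pex X B (reix _ _ (prodmap W f (idm B)) a);
  pall_BC : forall (X A B : C) (f : hom X A) (a : pred (prod W A B)),
      reix X A f (pall A B a) = pall X B (reix _ _ (prodmap W f (idm B)) a)
}.

Set Implicit Arguments.

Arguments pred {C W} _ _.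
Arguments ple {C W} _ {A} _ _.
Arguments ptop {C W} _ A.
Arguments reix {C W} _ {A B} _ _.
Arguments delta {C W} _ A.

Section Notions.
Variables (C : Cat) (W : WCC C) (P : WeakHyperdoctrine C W).

Definition is_weak_comprehension (A X : C) (alpha : pred P A) (c : hom X A) : Prop :=
  ple P (ptop P X) (reix P c alpha) /\
  forall (Z : C) (f : hom Z A), ple P (ptop P Z) (reix P f alpha) ->
    exists h : hom Z X, c ∘ h = f.

Definition full_weak_comprehensions : Prop :=
  (forall (A : C) (alpha : pred P A),
     exists (X : C) (c : hom X A), @is_weak_comprehension A X alpha c) /\
  (forall (A X Y : C) (alpha beta : pred P A) (ca : hom X A) (cb : hom Y A),
     @is_weak_comprehension A X alpha ca -> @is_weak_comprehension A Y beta cb ->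
     (exists h : hom X Y, cb ∘ h = ca) -> ple P alpha beta).

Definition comprehensive_diagonals : Prop :=
  forall (X Y : C) (f g : hom X Y),
    ple P (ptop P X) (reix P (pair W f g) (delta P Y)) -> f = g.

Definition is_PNNO (N : C) (z : hom (term W) N) (s : hom N N) : Prop :=
  forall (A X : C) (a : hom A X) (f : hom X X),
    exists k : hom (prod W A N) X,
      (k ∘ pair W (idm A) (z ∘ bang W A) = a /\
       k ∘ prodmap W (idm A) s = f ∘ k) /\
      forall k' : hom (prod W A N) X,
        k' ∘ pair W (idm A) (z ∘ bang W A) = a ->
        k' ∘ prodmap W (idm A) s = f ∘ k' -> k' = k.

Definition satisfies_induction (N : C) (z : hom (term W) N) (s : hom N N) : Prop :=
  forall (A : C) (phi : pred P (prod W A N)),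
    ple P (ptop P A) (reix P (pair W (idm A) (z ∘ bang W A)) phi) ->
    ple P phi (reix P (prodmap W (idm A) s) phi) ->
    ple P (ptop P (prod W A N)) phi.

End Notions.

Arguments is_weak_comprehension {C W} P {A X} _ _.
Arguments full_weak_comprehensions {C W} P.
Arguments comprehensive_diagonals {C W} P.
Arguments is_PNNO {C} W N z s.
Arguments satisfies_induction {C W} P N z s.


(* The comprehension [c : X -> A x N] of [phi] contains the zero section and
   is closed under [id x s], so the recursion principle of the natural number
   object yields [k : A x N -> X]; by uniqueness of recursors [c ∘ k] is the
   identity, whence [phi] holds everywhere. *)

Section PNNO.
Context {C : Cat} {W : WCC C} {N : C} {z : hom (term W) N} {s : hom N N}.
Hypothesis HN : is_PNNO W N z s.

Lemma pnno_endo_eq_id (A : C) (k : hom (prod W A N) (prod W A N)) :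
  k ∘ pair W (idm A) (z ∘ bang W A) = pair W (idm A) (z ∘ bang W A) ->
  k ∘ prodmap W (idm A) s = prodmap W (idm A) s ∘ k ->
  k = idm _.
Proof.
  intros Hk0 HkS.
  destruct (HN A (prod W A N) (pair W (idm A) (z ∘ bang W A)) (prodmap W (idm A) s))
    as [r [_ Hr]].
  rewrite (Hr k Hk0 HkS).
  symmetry; apply Hr.
  - apply comp_id_l.
  - rewrite comp_id_l, comp_id_r; reflexivity.
Qed.

Lemma pnno_inductive_split_epi {A X : C} {m : hom X (prod W A N)}
    {a : hom A X} {h : hom X X} :
  m ∘ a = pair W (idm A) (z ∘ bang W A) ->
  m ∘ h = prodmap W (idm A) s ∘ m ->
  exists k : hom (prod W A N) X, m ∘ k = idm _.
Proof.
  intros Ha Hh.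
  destruct (HN A X a h) as [k [[Hk0 HkS] _]].
  exists k; apply pnno_endo_eq_id.
  - rewrite <- comp_assoc, Hk0; exact Ha.
  - rewrite <- comp_assoc, HkS, comp_assoc, Hh, <- comp_assoc; reflexivity.
Qed.

End PNNO.

Lemma top_le_reix_comp {C : Cat} {W : WCC C} (P : WeakHyperdoctrine C W)
    {Y Z B : C} {g : hom Y B} (k : hom Z Y) {phi : pred P B} :
  ple P (ptop P Y) (reix P g phi) -> ple P (ptop P Z) (reix P (g ∘ k) phi).
Proof.
  intros H.
  rewrite reix_comp, <- (reix_top _ _ P _ _ k).
  apply reix_mono; exact H.
Qed.

Theorem proposition3p5 (C : Cat) (W : WCC C) (N : C)
    (z : hom (term W) N) (s : hom N N) (P : WeakHyperdoctrine C W) :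
  is_PNNO W N z s ->
  full_weak_comprehensions P ->
  comprehensive_diagonals P ->
  satisfies_induction P N z s.
Proof.
  intros HN [Hcomp _] _ A phi Hbase Hstep.
  destruct (Hcomp _ phi) as [X [c [Hc Hfactor]]].
  destruct (Hfactor _ _ Hbase) as [a Ha].
  destruct (Hfactor _ (prodmap W (idm A) s ∘ c)) as [h Hh].
  { rewrite reix_comp.
    apply (ple_trans _ _ P _ _ _ _ Hc), reix_mono, Hstep. }
  destruct (pnno_inductive_split_epi HN Ha Hh) as [k Hck].
  rewrite <- (reix_id _ _ P _ phi), <- Hck.
  exact (top_le_reix_comp P k Hc).
Qed.
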